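(* Let $\mathbb O=\{-m,\dots,0,\dots,M\}$ with integers $m,M\ge1$, and $\theta=0$. For every $x(0)\in\mathbb O^n$: if there exists a finite legal update sequence from $x(0)$ without crossing updates along which the trajectory reaches the consensus state $(0,\dots,0)$, then there exists a finite legal update sequence from $x(0)$ without crossing updates along which the system reaches a state $y$ (not necessarily an equilibrium) with $y_i=-1$ for every $i$ with $x_i(0)<0$ and $y_i=1$ for every $i$ with $x_i(0)>0$.
   Context: Let $n\ge1$, $\mathcal V=\{1,\dots,n\}$, and let $W=(w_{ij})$ be an $n\times n$ row-stochastic matrix. For $x\in\mathbb O^n$, $i\in\mathcal V$, $z\in\mathbb O$, define $C^i_{\mathrm{social}}(z;x)=\sum_{j=1}^n w_{ij}|z-x_j|$ and $P_i(x)=\{z\in\mathbb O: C^i_{\mathrm{social}}(z;x)\le C^i_{\mathrm{social}}(x_i;x),\ |z-\theta|\le |x_i-\theta|\}$. A legal update sequence from $x(0)$ is a finite sequence $(i_1,z_1),\dots,(i_T,z_T)$ with $i_t\in\mathcal V$, generating $x(1),\dots,x(T)$ where $x(t)$ is obtained from $x(t-1)$ by setting coordinate $i_t$ to $z_t$, such that $z_t\in P_{i_t}(x(t-1))$ for every $t$. The update at step $t$ is a crossing update if $(x_{i_t}(t)-\theta)(x_{i_t}(t-1)-\theta)<0$. *)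

From mathcomp Require Import all_boot all_order all_algebra.
Set Implicit Arguments. Unset Strict Implicit. Unset Printing Implicit Defensive.
Import Order.TTheory GRing.Theory Num.Theory.
Local Open Scope ring_scope.

Definition inO (m M : nat) (z : int) : bool := (- (m%:Z) <= z) && (z <= M%:Z).

Definition state (n : nat) := 'I_n -> int.

Definition row_stochastic (R : numDomainType) (n : nat) (W : 'M[R]_n) : Prop :=
  (forall i j, 0 <= W i j) /\ (forall i, \sum_(j < n) W i j = 1).

Definition C_social (R : numDomainType) (n : nat) (W : 'M[R]_n)
    (i : 'I_n) (z : int) (x : state n) : R :=
  \sum_(j < n) W i j * (`|z - x j|%:~R).

Definition inP (R : numDomainType) (m M : nat) (theta : int) (n : nat)
    (W : 'M[R]_n) (x : state n) (i : 'I_n) (z : int) : Prop :=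
  [/\ inO m M z,
      C_social W i z x <= C_social W i (x i) x
    & `|z - theta| <= `|x i - theta|].

Definition upd (n : nat) (x : state n) (i : 'I_n) (z : int) : state n :=
  fun j => if j == i then z else x j.

Definition crossing (theta : int) (n : nat) (x : state n) (i : 'I_n) (z : int) : Prop :=
  (z - theta) * (x i - theta) < 0.

Fixpoint legal_nocross (R : numDomainType) (m M : nat) (theta : int) (n : nat)
    (W : 'M[R]_n) (x : state n) (s : seq ('I_n * int)) : Prop :=
  match s with
  | [::] => True
  | (i, z) :: s' =>
      [/\ inP m M theta W x i z, ~ crossing theta x i z
        & legal_nocross m M theta W (upd x i z) s']
  end.

Fixpoint reaches (n : nat) (x : state n) (s : seq ('I_n * int)) (Q : state n -> Prop) : Prop :=
  Q x \/ match s with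
         | [::] => False
         | (i, z) :: s' => reaches (upd x i z) s' Q
         end.

From mathcomp Require Import all_boot all_order all_algebra.
From mathcomp Require Import zify ring.
Import Order.TTheory GRing.Theory Num.Theory.
Set Implicit Arguments.
Unset Strict Implicit.
Unset Printing Implicit Defensive.
Local Open Scope ring_scope.

(* Without crossings, and with |z| <= |x_i| at every step, each agent stays on
   the side of 0 where it started.  Lift every state by replacing each zero
   coordinate j by sgz (x_j(0)), and every move to 0 by a move to the sign of
   the start.  Lifted neighbours differ from the original ones only where those
   were 0, and by at most 1, which does not change the cost difference of a move
   between two points strictly on one side of 0.  For a move from a to 0 lifted
   to a move from a to sgz a, the per-neighbour cost differences satisfy
   |a| * (|sgz a - c'| - |a - c'|) <= (|a| - 1) * (|c| - |a - c|), so the lifted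
   move is still cost-decreasing.  The consensus state lifts to the state of
   signs. *)

Definition is_lift (c c' : int) : Prop := c' = c \/ (c = 0 /\ -1 <= c' <= 1).

Definition lift (s v : int) : int := if v == 0 then s else v.

Lemma lift_sgz (v : int) : lift (sgz v) v = v.
Proof. by rewrite /lift; case: eqP => // ->. Qed.

Lemma is_lift_sgz (u v : int) : is_lift v (lift (sgz u) v).
Proof.
rewrite /is_lift /lift; case: eqP => [->|_]; last by left.
by right; split=> //; case: sgzP.
Qed.

Lemma inO_lift_sgz (m M : nat) (u z : int) : (1 <= m)%N -> (1 <= M)%N ->
  inO m M z -> inO m M (lift (sgz u) z).
Proof. by rewrite /inO /lift => m1 M1; case: eqP => // _; case: sgzP; lia. Qed.

Lemma dist_diff_is_lift (a b c c' : int) : 0 < b * a -> is_lift c c' ->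
  `|b - c'| - `|a - c'| <= `|b - c| - `|a - c|.
Proof.
rewrite /is_lift; case: (ltrgt0P a) => [a_pos|a_neg|->]; rewrite ?mulr0 //.
- by rewrite pmulr_lgt0 //; lia.
- by rewrite nmulr_lgt0 //; lia.
Qed.

Lemma is_liftN (c c' : int) : is_lift c c' -> is_lift (- c) (- c').
Proof. rewrite /is_lift; lia. Qed.

Lemma distrNN (u v : int) : `|- u - - v| = `|u - v|.
Proof. by rewrite -opprD normrN. Qed.

Lemma dist_diff_is_lift_sgz (a c c' : int) : a != 0 -> is_lift c c' ->
  `|a| * (`|sgz a - c'| - `|a - c'|) <= (`|a| - 1) * (`|c| - `|a - c|).
Proof.
wlog a_pos : a c c' / 0 < a => [pos_case|_].
  rewrite neq_lt => /orP[a_neg|a_pos] lift_cc'; last first.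
    exact: pos_case (lt0r_neq0 a_pos) lift_cc'.
  have := pos_case (- a) (- c) (- c'); rewrite oppr_gt0 oppr_eq0 sgzN !distrNN !normrN.
  by move/(_ a_neg (ltr0_neq0 a_neg) (is_liftN lift_cc')).
rewrite gtr0_sgz // gtr0_norm // => -[->|[-> c'_small]].
- have triangle : `|a * (1 - c)| <= `|(a - 1) * (0 - c)| + `|a - c|.
    have -> : a * (1 - c) = (a - 1) * (0 - c) + (a - c) by ring.
    exact: ler_normD.
  rewrite !normrM in triangle; lia.
- have -> : `|1 - c'| - `|a - c'| = 1 - a by lia.
  by rewrite normr0 subr0 gtr0_norm //; lia.
Qed.

Lemma sum_le0_scaled (R : numDomainType) (I : finType) (w : I -> R)
    (d d' : I -> int) (t s : int) :
  (forall j, 0 <= w j) -> 0 < t -> 0 <= s -> (forall j, t * d' j <= s * d j) ->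
  \sum_j w j * (d j)%:~R <= 0 -> \sum_j w j * (d' j)%:~R <= 0.
Proof.
move=> w_ge0 t_gt0 s_ge0 scaled sum_le0.
have scaled_sum : t%:~R * \sum_j w j * (d' j)%:~R <= s%:~R * \sum_j w j * (d j)%:~R :> R.
  rewrite !mulr_sumr; apply: ler_sum => j _; rewrite !(mulrCA _ (w j)).
  by rewrite ler_wpM2l // -!intrM ler_int.
have t_gt0R : 0 < t%:~R :> R by rewrite ltr0z.
rewrite -(pmulr_rle0 _ t_gt0R); apply: le_trans scaled_sum _.
by rewrite mulr_ge0_le0 // ler0z.
Qed.

Lemma C_socialB (R : numDomainType) (n : nat) (W : 'M[R]_n) (i : 'I_n)
    (b a : int) (x : state n) :
  C_social W i b x - C_social W i a x = \sum_j W i j * (`|b - x j| - `|a - x j|)%:~R.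
Proof. by rewrite /C_social -sumrB; apply: eq_bigr => j _; rewrite intrB mulrBr. Qed.

Lemma C_social_lift_le (R : numDomainType) (n : nat) (W : 'M[R]_n) (i : 'I_n)
    (x x' : state n) (a z : int) :
  (forall j, 0 <= W i j) -> (forall j, is_lift (x j) (x' j)) ->
  a != 0 -> 0 <= z * a ->
  C_social W i z x <= C_social W i a x ->
  C_social W i (lift (sgz a) z) x' <= C_social W i a x'.
Proof.
move=> W_ge0 x'_lift a_neq0 za_ge0.
rewrite -subr_le0 C_socialB => cost_le; rewrite -subr_le0 C_socialB /lift.
case: eqP cost_le => [->|/eqP z_neq0] cost_le.
- apply: (sum_le0_scaled (t := `|a|) (s := `|a| - 1) _ _ _ _ cost_le) => //; [lia | lia |].
  by move=> j; rewrite sub0r normrN; exact: dist_diff_is_lift_sgz.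
- apply: (sum_le0_scaled (t := 1) (s := 1) _ _ _ _ cost_le) => // j; rewrite !mul1r.
  by apply: dist_diff_is_lift; rewrite // lt_def mulf_neq0.
Qed.

Lemma lift_sgz_update (a z : int) : a != 0 -> 0 <= z * a -> `|z| <= `|a| ->
  [/\ `|lift (sgz a) z| <= `|a|, 0 <= lift (sgz a) z * a & z = 0 \/ sgz z = sgz a].
Proof.
rewrite /lift; case: (ltrgt0P a) => [a_pos|a_neg|->] //= _.
- rewrite gtr0_sgz // pmulr_lge0 // => z_ge0 z_le.
  case: eqP => [->|z_neq0]; first by split; [lia | lia | left].
  by split; [lia | rewrite pmulr_lge0 | right; rewrite gtr0_sgz //; lia].
- rewrite ltr0_sgz // nmulr_lge0 // => z_le0 z_le.
  case: eqP => [->|z_neq0]; first by split; [lia | lia | left].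
  by split; [lia | rewrite nmulr_lge0 | right; rewrite ltr0_sgz //; lia].
Qed.

Section Lifting.

Variables (R : numDomainType) (n m M : nat) (W : 'M[R]_n) (x0 : state n).
Hypotheses (m_ge1 : (1 <= m)%N) (M_ge1 : (1 <= M)%N) (W_ge0 : forall i j, 0 <= W i j).

Definition sign_compatible (x : state n) : Prop :=
  forall j, x j = 0 \/ sgz (x j) = sgz (x0 j).

Definition lift_state (x : state n) : state n := fun j => lift (sgz (x0 j)) (x j).

Definition lift_seq (s : seq ('I_n * int)) : seq ('I_n * int) :=
  [seq (p.1, lift (sgz (x0 p.1)) p.2) | p <- s].

Lemma lift_state_upd (x x' : state n) i z : x' =1 lift_state x ->
  upd x' i (lift (sgz (x0 i)) z) =1 lift_state (upd x i z).
Proof. by move=> x'E j; rewrite /upd /lift_state; case: eqP => [->|]. Qed.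

Lemma lift_step (x x' : state n) i z : sign_compatible x -> x' =1 lift_state x ->
  inP m M 0 W x i z -> ~ crossing 0 x i z ->
  [/\ inP m M 0 W x' i (lift (sgz (x0 i)) z), ~ crossing 0 x' i (lift (sgz (x0 i)) z)
    & sign_compatible (upd x i z)].
Proof.
move=> compat x'E [z_inO cost_le]; rewrite /inP /crossing !subr0 => z_le /negP.
rewrite -leNgt => za_ge0.
have compat_upd : z = 0 \/ sgz z = sgz (x0 i) -> sign_compatible (upd x i z).
  by move=> z_compat j; rewrite /upd; case: eqP => [->|_].
case: (eqVneq (x i) 0) => [a0|a_neq0].
- have z0 : z = 0 by move: z_le; rewrite a0 normr0 normr_le0 => /eqP.
  have x'i : x' i = lift (sgz (x0 i)) z by rewrite x'E /lift_state a0 z0.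
  rewrite -x'i -expr2 ltNge sqr_ge0; split=> //; last exact: compat_upd (or_introl z0).
  by split; rewrite // x'i; exact: inO_lift_sgz.
- have sgz_a : sgz (x0 i) = sgz (x i) by case: (compat i) a_neq0 => ->; rewrite ?eqxx.
  have x'i : x' i = x i by rewrite x'E /lift_state sgz_a lift_sgz.
  have [lift_le lift_ge0 z_compat] := lift_sgz_update a_neq0 za_ge0 z_le.
  rewrite x'i sgz_a ltNge lift_ge0; split=> //; last by apply: compat_upd; rewrite sgz_a.
  split=> //; first exact: inO_lift_sgz.
  apply: C_social_lift_le a_neq0 za_ge0 cost_le => // j.
  by rewrite x'E; apply: is_lift_sgz.
Qed.

Lemma lift_seq_legal_reaches (s : seq ('I_n * int)) (x x' : state n) :
  sign_compatible x -> x' =1 lift_state x -> legal_nocross m M 0 W x s ->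
  legal_nocross m M 0 W x' (lift_seq s) /\
  (reaches x s (fun y => forall j, y j = 0) ->
   reaches x' (lift_seq s)
     (fun y => forall i, (x0 i < 0 -> y i = -1) /\ (0 < x0 i -> y i = 1))).
Proof.
have lift_zero (y y' : state n) : (forall j, y j = 0) -> y' =1 lift_state y ->
    forall i, (x0 i < 0 -> y' i = -1) /\ (0 < x0 i -> y' i = 1).
  move=> y0 y'E i; rewrite y'E /lift_state y0 /lift eqxx.
  by split; [exact: ltr0_sgz | exact: gtr0_sgz].
elim: s x x' => [|[i z] s IH] x x' compat x'E //=.
  by split=> // -[y0|//]; left; apply: lift_zero y0 x'E.
move=> [step_ok no_cross legal].
have [step_ok' no_cross' compat'] := lift_step compat x'E step_ok no_cross.
have [legal' reach'] := IH _ _ compat' (lift_state_upd i z x'E) legal.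
split=> // -[y0|reach]; [left; apply: lift_zero y0 x'E | right; exact: reach'].
Qed.

End Lifting.

Theorem lemma4 (R : realFieldType) (n m M : nat) (W : 'M[R]_n) (x0 : state n) :
  (0 < n)%N -> (1 <= m)%N -> (1 <= M)%N ->
  row_stochastic W ->
  (forall i, inO m M (x0 i)) ->
  (exists s, legal_nocross m M 0 W x0 s /\ reaches x0 s (fun x => forall j, x j = 0)) ->
  exists s, legal_nocross m M 0 W x0 s /\
    reaches x0 s (fun y => forall i, (x0 i < 0 -> y i = -1) /\ (0 < x0 i -> y i = 1)).
Proof.
move=> _ m_ge1 M_ge1 [W_ge0 _] _ [s [legal reach]].
have compat0 : sign_compatible x0 x0 by move=> j; right.
have x0E : x0 =1 lift_state x0 x0 by move=> j; rewrite /lift_state lift_sgz.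
have [legal' reach'] := lift_seq_legal_reaches m_ge1 M_ge1 W_ge0 compat0 x0E legal.
by exists (lift_seq x0 s); split; last exact: reach'.
Qed.
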